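(* For $n=4$, the row span $[C]$ of the cyclic matrix $C$ is the unique minimizer of $E$ on $Gr^{>0}(2,4)$.
   Context: For a real $2\times n$ matrix $X$ and $1\le i<j\le n$, $\Delta_{i,j}(X)$ is the determinant of the $2\times2$ submatrix of columns $i,j$. $Gr^{>0}(2,n)$ is the set of 2-dimensional subspaces of $\mathbb{R}^n$ having a spanning $2\times n$ matrix $X$ (rows spanning the subspace) with $\Delta_{i,j}(X)>0$ for all $i<j$; $E(x)=\max_{i<j}\Delta_{i,j}(X)/\min_{i<j}\Delta_{i,j}(X)$. The cyclic matrix $C$ is the $2\times n$ matrix whose $m$-th column is $(\cos((m-1)\pi/n),\sin((m-1)\pi/n))^T$, $m=1,\dots,n$. *)

From HB Require Import structures.
From mathcomp Require Import all_boot all_order all_algebra.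
From mathcomp Require Import all_classical all_reals all_analysis.
Set Implicit Arguments. Unset Strict Implicit. Unset Printing Implicit Defensive.
Import Order.TTheory GRing.Theory Num.Theory.
Local Open Scope ring_scope.

Definition Delta (R : realType) (n : nat) (X : 'M[R]_(2, n)) (i j : 'I_n) : R :=
  X 0 i * X 1 j - X 0 j * X 1 i.

Definition totally_positive (R : realType) (n : nat) (X : 'M[R]_(2, n)) : Prop :=
  forall i j : 'I_n, (i < j)%N -> 0 < Delta X i j.

(* Max / min of Delta_{i,j} over i<j (n = 4; the pair (0,1) serves as seed,
   it belongs to the index set). *)
Definition maxDelta4 (R : realType) (X : 'M[R]_(2, 4)) : R :=
  \big[Num.max/Delta X 0 1]_(p : 'I_4 * 'I_4 | (p.1 < p.2)%N) Delta X p.1 p.2.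
Definition minDelta4 (R : realType) (X : 'M[R]_(2, 4)) : R :=
  \big[Num.min/Delta X 0 1]_(p : 'I_4 * 'I_4 | (p.1 < p.2)%N) Delta X p.1 p.2.

(* E(x) computed from a totally positive representative X of x. *)
Definition E4 (R : realType) (X : 'M[R]_(2, 4)) : R := maxDelta4 X / minDelta4 X.

Definition cyclicC (R : realType) (n : nat) : 'M[R]_(2, n) :=
  \matrix_(i < 2, m < n)
    (if i == 0 then cos (m%:R * pi / n%:R) else sin (m%:R * pi / n%:R)).

(* For any totally positive 2x4 matrix X, with M and m the largest
   and smallest Plucker coordinates, the three-term Plucker relation
     Delta_02 Delta_13 = Delta_01 Delta_23 + Delta_03 Delta_12
   gives M^2 >= Delta_02 Delta_13 >= 2 m^2, i.e. E(X) = M/m >= sqrt 2.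
   For C, with s = sin(pi/4) = 1/sqrt 2, the coordinates are
   Delta_02 = Delta_13 = 1 and all others equal s, so E(C) = 1/s = sqrt 2.
   If E(X) = sqrt 2 every inequality in the chain is tight, which forces
   Delta_02 = Delta_13 = M and the other four coordinates to equal m = M s;
   hence the Plucker coordinates of X are M times those of C.  Since the
   columns 0 and 2 of C form the identity matrix, Cramer's rule then writes
   X = A C with det A = Delta_02(X) != 0, so X and C have the same row space. *)

From HB Require Import structures.
From mathcomp Require Import all_boot all_order all_algebra.
From mathcomp Require Import all_classical all_reals all_analysis.
From mathcomp Require Import ring lra.
Import Order.TTheory GRing.Theory Num.Theory.
Local Open Scope ring_scope.

Lemma ord2_case (P : 'I_2 -> Prop) : P 0 -> P 1 -> forall j, P j.
Proof.
move=> h0 h1 [[|[|j]] lt_j] //.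
- by have -> : Ordinal lt_j = 0 by apply: val_inj.
- by have -> : Ordinal lt_j = 1 by apply: val_inj.
Qed.

Lemma ord4_case (P : 'I_4 -> Prop) : P 0 -> P 1 -> P 2 -> P 3 -> forall j, P j.
Proof.
move=> h0 h1 h2 h3 [[|[|[|[|j]]]] lt_j] //.
- by have -> : Ordinal lt_j = 0 by apply: val_inj.
- by have -> : Ordinal lt_j = 1 by apply: val_inj.
- by have -> : Ordinal lt_j = 2 by apply: val_inj.
- by have -> : Ordinal lt_j = 3 by apply: val_inj.
Qed.

Lemma pairs4_case (P : 'I_4 -> 'I_4 -> Prop) :
  P 0 1 -> P 0 2 -> P 0 3 -> P 1 2 -> P 1 3 -> P 2 3 ->
  forall i j : 'I_4, (i < j)%N -> P i j.
Proof. by move=> ? ? ? ? ? ? i j; elim/ord4_case: i; elim/ord4_case: j. Qed.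

Lemma det_mx2 {R : comPzRingType} (A : 'M[R]_2) :
  \det A = A 0 0 * A 1 1 - A 0 1 * A 1 0.
Proof.
rewrite (expand_det_row _ 0) !big_ord_recl big_ord0 /cofactor !det_mx11 !mxE.
have -> : lift (0 : 'I_2) (0 : 'I_1) = 1 by apply: val_inj.
have -> : lift (1 : 'I_2) (0 : 'I_1) = 0 by apply: val_inj.
by rewrite /= expr0 expr1; ring.
Qed.

Lemma prod_eq_sq_upper {R : realFieldType} (a b M : R) :
  0 < a -> 0 < b -> a <= M -> b <= M -> a * b = M * M -> a = M /\ b = M.
Proof.
move=> a_gt0 b_gt0 aM bM abM.
have Mb : M <= b by rewrite -(ler_pM2l a_gt0); nra.
have Ma : M <= a by rewrite -(ler_pM2r b_gt0); nra.
by split; apply/le_anti/andP.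
Qed.

Lemma prod_eq_sq_lower {R : realFieldType} (a b m : R) :
  0 < m -> m <= a -> m <= b -> a * b = m * m -> a = m /\ b = m.
Proof.
move=> m_gt0 ma mb abm.
have bm : b <= m by rewrite -(ler_pM2l m_gt0); nra.
have am : a <= m by rewrite -(ler_pM2r m_gt0); nra.
by split; apply/le_anti/andP.
Qed.

Section MinorsOfTwoRowMatrices.
Context {R : realType} {n : nat}.
Implicit Types (X Y : 'M[R]_(2, n)) (a b c d k : 'I_n).

Lemma Delta_antisym X a b : Delta X b a = - Delta X a b.
Proof. by rewrite /Delta; ring. Qed.

Lemma Delta_diag X a : Delta X a a = 0.
Proof. by rewrite /Delta subrr. Qed.

Lemma plucker_relation X a b c d :
  Delta X a c * Delta X b d = Delta X a b * Delta X c d + Delta X a d * Delta X b c.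
Proof. by rewrite /Delta; ring. Qed.

Lemma Delta_cramer X a b k (r : 'I_2) :
  Delta X a b * X r k = Delta X k b * X r a + Delta X a k * X r b.
Proof. by elim/ord2_case: r; rewrite /Delta; ring. Qed.

Lemma Delta_proportional X Y (l : R) :
  (forall a b, (a < b)%N -> Delta X a b = l * Delta Y a b) ->
  forall a b, Delta X a b = l * Delta Y a b.
Proof.
move=> prop a b; case: (ltngtP a b) => [lt_ab | lt_ba | eq_ab].
- exact: prop.
- by rewrite Delta_antisym (Delta_antisym Y) prop // mulrN.
- by rewrite (val_inj eq_ab) !Delta_diag mulr0.
Qed.

(* If columns a and b of Y are the standard basis and the Plucker coordinates
   of X are a nonzero multiple of those of Y, then X = A *m Y with A the
   invertible matrix formed by columns a and b of X: the row spaces agree. *)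
Lemma eqmx_of_proportional_Delta X Y a b (l : R) :
  l != 0 -> Y 0 a = 1 -> Y 1 a = 0 -> Y 0 b = 0 -> Y 1 b = 1 ->
  (forall i j : 'I_n, (i < j)%N -> Delta X i j = l * Delta Y i j) -> (X == Y)%MS.
Proof.
move=> l_neq0 Y0a Y1a Y0b Y1b /Delta_proportional prop.
have DXab : Delta X a b = l by rewrite prop /Delta Y0a Y1a Y0b Y1b; ring.
pose A : 'M[R]_2 := \matrix_(r < 2, c < 2) X r (if c == 0 then a else b).
have -> : X = A *m Y.
  apply/matrixP => r k; rewrite !mxE !big_ord_recl big_ord0 !mxE /=.
  have -> : lift ord0 ord0 = 1 :> 'I_2 by apply: val_inj.
  apply: (mulfI l_neq0); rewrite -{1}DXab Delta_cramer !prop /Delta.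
  by rewrite Y0a Y1a Y0b Y1b; ring.
apply/eqmxP; apply: eqmxMfull; rewrite row_full_unit unitmxE unitfE det_mx2 !mxE /=.
by rewrite -[_ - _]/(Delta X a b) DXab.
Qed.

End MinorsOfTwoRowMatrices.

(* 2s = sqrt 2 when 2 s^2 = 1: comparing a ratio M/m with sqrt 2 amounts to
   comparing M^2 with 2 m^2. *)
Lemma ratio_ge_sqrt2 {R : realFieldType} {s m M : R} :
  0 < s -> 2 * s ^+ 2 = 1 -> 0 < m -> 0 < M -> 2 * m ^+ 2 <= M ^+ 2 ->
  2 * s <= M / m.
Proof. by move=> s_gt0 s_sq m_gt0 M_gt0 mM; rewrite ler_pdivlMr //; nra. Qed.

Lemma ratio_eq_sqrt2 {R : realFieldType} {s m M : R} :
  2 * s ^+ 2 = 1 -> 0 < m -> M / m = 2 * s -> M * s = m /\ 2 * m ^+ 2 = M ^+ 2.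
Proof.
move=> s_sq m_gt0 ratio.
have -> : M = 2 * s * m by rewrite -ratio divfK ?gt_eqF.
split; first by rewrite -[RHS]mul1r -[in RHS]s_sq; ring.
by rewrite -[LHS]mul1r -{1}s_sq; ring.
Qed.

Section ExtremalCoordinates.
Context {R : realType}.
Implicit Type X : 'M[R]_(2, 4).

Lemma maxDelta4_ub X (i j : 'I_4) : (i < j)%N -> Delta X i j <= maxDelta4 X.
Proof. by move=> lt_ij; rewrite /maxDelta4 (bigD1 (i, j)) //= le_max lexx. Qed.

Lemma minDelta4_lb X (i j : 'I_4) : (i < j)%N -> minDelta4 X <= Delta X i j.
Proof. by move=> lt_ij; rewrite /minDelta4 (bigD1 (i, j)) //= ge_min lexx. Qed.

Lemma maxDelta4_attained X :
  exists i j : 'I_4, (i < j)%N /\ maxDelta4 X = Delta X i j.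
Proof.
rewrite /maxDelta4.
apply: (big_ind (fun v => exists i j : 'I_4, (i < j)%N /\ v = Delta X i j)).
- by exists 0, 1.
- move=> _ _ [i [j [lt_ij ->]]] [k [l [lt_kl ->]]].
  by case: ltP => _; [exists k, l | exists i, j].
- by move=> [i j] /= lt_ij; exists i, j.
Qed.

Lemma minDelta4_attained X :
  exists i j : 'I_4, (i < j)%N /\ minDelta4 X = Delta X i j.
Proof.
rewrite /minDelta4.
apply: (big_ind (fun v => exists i j : 'I_4, (i < j)%N /\ v = Delta X i j)).
- by exists 0, 1.
- move=> _ _ [i [j [lt_ij ->]]] [k [l [lt_kl ->]]].
  by case: ltP => _; [exists i, j | exists k, l].
- by move=> [i j] /= lt_ij; exists i, j.
Qed.

Lemma maxDelta4_eq X (i j : 'I_4) :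
  (i < j)%N -> (forall k l : 'I_4, (k < l)%N -> Delta X k l <= Delta X i j) ->
  maxDelta4 X = Delta X i j.
Proof.
move=> lt_ij ub; apply/le_anti; rewrite maxDelta4_ub // andbT.
by have [k [l [lt_kl ->]]] := maxDelta4_attained X; exact: ub.
Qed.

Lemma minDelta4_eq X (i j : 'I_4) :
  (i < j)%N -> (forall k l : 'I_4, (k < l)%N -> Delta X i j <= Delta X k l) ->
  minDelta4 X = Delta X i j.
Proof.
move=> lt_ij lb; apply/le_anti; rewrite minDelta4_lb //=.
by have [k [l [lt_kl ->]]] := minDelta4_attained X; exact: lb.
Qed.

Lemma minDelta4_gt0 {X} : totally_positive X -> 0 < minDelta4 X.
Proof. by move=> tpX; have [i [j [lt_ij ->]]] := minDelta4_attained X; exact: tpX. Qed.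

Lemma plucker_extremal_products {X} : totally_positive X ->
  let M := maxDelta4 X in let m := minDelta4 X in
  [/\ Delta X 0 2 * Delta X 1 3 <= M * M,
      m * m <= Delta X 0 1 * Delta X 2 3 &
      m * m <= Delta X 0 3 * Delta X 1 2].
Proof.
move=> tpX M m; have m_ge0 := ltW (minDelta4_gt0 tpX).
split; apply: ler_pM;
  by rewrite ?(ltW (tpX _ _ _)) ?maxDelta4_ub ?minDelta4_lb.
Qed.

Lemma plucker_extremal_bound {X} : totally_positive X ->
  2 * minDelta4 X ^+ 2 <= maxDelta4 X ^+ 2.
Proof.
move=> tpX; have [hM h1 h2] := plucker_extremal_products tpX.
have := plucker_relation X (0 : 'I_4) 1 2 3; rewrite !expr2; lra.
Qed.

Lemma plucker_extremal_eq {X} : totally_positive X ->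
  let M := maxDelta4 X in let m := minDelta4 X in
  2 * m ^+ 2 = M ^+ 2 ->
  (Delta X 0 2 = M /\ Delta X 1 3 = M) /\
  [/\ Delta X 0 1 = m, Delta X 2 3 = m, Delta X 0 3 = m & Delta X 1 2 = m].
Proof.
move=> tpX M m; rewrite !expr2 => eq_mM.
have [hM h1 h2] := plucker_extremal_products tpX; rewrite -/M -/m in hM h1 h2.
have rel := plucker_relation X (0 : 'I_4) 1 2 3.
have m_gt0 : 0 < m := minDelta4_gt0 tpX.
have [e02 e13] : Delta X 0 2 = M /\ Delta X 1 3 = M.
  by apply: prod_eq_sq_upper; rewrite ?tpX ?maxDelta4_ub //; lra.
have [e01 e23] : Delta X 0 1 = m /\ Delta X 2 3 = m.
  by apply: prod_eq_sq_lower; rewrite ?minDelta4_lb //; lra.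
have [e03 e12] : Delta X 0 3 = m /\ Delta X 1 2 = m.
  by apply: prod_eq_sq_lower; rewrite ?minDelta4_lb //; lra.
by split.
Qed.

End ExtremalCoordinates.

Section CyclicMatrix.
Context {R : realType}.
Local Notation s := (sin (pi / 4) : R).
Local Notation C := (cyclicC R 4).

(* sin(pi/4) = cos(pi/4) = 1/sqrt 2, obtained from tan(pi/4) = 1. *)
Lemma cos_piquarter_gt0 : 0 < cos (pi / 4) :> R.
Proof.
have pi_gt0 := pi_gt0 R.
by apply: cos_gt0_pihalf; apply/andP; split; lra.
Qed.

Lemma cos_piquarter : cos (pi / 4) = s.
Proof. by have /divr1_eq -> := tan_piquarter R. Qed.

Lemma sin_piquarter_gt0 : 0 < s.
Proof. by rewrite -cos_piquarter cos_piquarter_gt0. Qed.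

Lemma sin_piquarter_sq : 2 * s ^+ 2 = 1.
Proof. by have := cos2Dsin2 (pi / 4 : R); rewrite cos_piquarter; lra. Qed.

Lemma cyclicC4_entries :
  [/\ C 0 0 = 1, C 1 0 = 0, C 0 1 = s & C 1 1 = s] /\
  [/\ C 0 2 = 0, C 1 2 = 1, C 0 3 = - s & C 1 3 = s].
Proof.
have angle2 : 2%:R * pi / 4%:R = pi / 2 :> R by field.
have angle3 : 3%:R * pi / 4%:R = pi / 4 + pi / 2 :> R by field.
rewrite /cyclicC !mxE /= mul0r mul0r mul1r angle2 angle3.
rewrite cos0 sin0 cos_pihalf sin_pihalf cosDpihalf sinDpihalf cos_piquarter.
by do !split.
Qed.

Lemma cyclicC4_Delta (i j : 'I_4) :
  (i < j)%N -> Delta C i j = if (j - i == 2)%N then 1 else s.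
Proof.
have [[c00 c10 c01 c11] [c02 c12 c03 c13]] := cyclicC4_entries.
have s_sq := sin_piquarter_sq.
move: i j; apply: pairs4_case;
  by rewrite /Delta /= ?c00 ?c10 ?c01 ?c11 ?c02 ?c12 ?c03 ?c13; nra.
Qed.

Lemma cyclicC4_totally_positive : totally_positive C.
Proof.
move=> i j lt_ij; rewrite cyclicC4_Delta //.
by case: ifP => _; rewrite ?ltr01 ?sin_piquarter_gt0.
Qed.

(* E(C) = 1/s = 2s = sqrt 2: the maximum 1 sits at (0,2), the minimum s at (0,1). *)
Lemma E4_cyclicC4 : E4 C = 2 * s.
Proof.
have s_gt0 := sin_piquarter_gt0; have s_sq := sin_piquarter_sq.
have s_lt1 : s < 1 by nra.
have Dbounds (k l : 'I_4) : (k < l)%N -> s <= Delta C k l <= 1.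
  by move=> lt_kl; rewrite cyclicC4_Delta //; case: ifP => _; lra.
rewrite /E4 (@maxDelta4_eq _ _ 0 2) // ?(@minDelta4_eq _ _ 0 1) //.
- by rewrite !cyclicC4_Delta //= -{1}s_sq expr2 mulrA mulfK ?gt_eqF.
- by move=> k l /Dbounds; rewrite (cyclicC4_Delta 0 1) // => /andP[].
- by move=> k l /Dbounds; rewrite (cyclicC4_Delta 0 2) // => /andP[].
Qed.

End CyclicMatrix.

Theorem mainTheorem4 (R : realType) :
  totally_positive (cyclicC R 4) /\
  (forall X : 'M[R]_(2, 4), totally_positive X ->
     E4 (cyclicC R 4) <= E4 X /\
     (E4 X = E4 (cyclicC R 4) -> (X == cyclicC R 4)%MS)).
Proof.
have s_sq := @sin_piquarter_sq R; set s := sin (pi / 4) in s_sq *.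
split; first exact: cyclicC4_totally_positive.
move=> X tpX; rewrite E4_cyclicC4 /E4 -/s.
have m_gt0 := minDelta4_gt0 tpX.
have M_gt0 : 0 < maxDelta4 X.
  by apply: lt_le_trans (maxDelta4_ub X (0 : 'I_4) 1 _); rewrite ?tpX.
split; first exact: ratio_ge_sqrt2 sin_piquarter_gt0 s_sq m_gt0 M_gt0
  (plucker_extremal_bound tpX).
set M := maxDelta4 X; set m := minDelta4 X.
move=> /(ratio_eq_sqrt2 s_sq m_gt0) [Ms /(plucker_extremal_eq tpX) equalities].
have [[e02 e13] [e01 e23 e03 e12]] := equalities.
have [[c00 c10 _ _] [c02 c12 _ _]] := @cyclicC4_entries R.
apply: (eqmx_of_proportional_Delta X _ 0 2 M _ c00 c10 c02 c12).
  exact: lt0r_neq0.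
by apply: pairs4_case; rewrite !cyclicC4_Delta //= -/s ?mulr1 ?Ms.
Qed.
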